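(* Let $\Sigma$ be a set. Any subset of $T^1(\Sigma)$ closed under pruned multiplication, $+$ and $*$ forms an adequate semigroup under these operations (with $+$ and $*$ being the adequate-semigroup operations). Any subset of $T^1(\Sigma)$ closed under pruned multiplication and $+$ [respectively, pruned multiplication and $*$] forms a left adequate [respectively, right adequate] semigroup under these operations.
   Context: Semigroup notions: for a semigroup $S$ let $S^1=S$ if $S$ is a monoid and otherwise $S$ with an identity adjoined. $a\,\mathcal{L}^*\,b$ iff for all $x,y\in S^1$: $ax=ay\Leftrightarrow bx=by$; $a\,\mathcal{R}^*\,b$ iff for all $x,y\in S^1$: $xa=ya\Leftrightarrow xb=yb$. $S$ is left adequate if its idempotents commute and every $\mathcal{R}^*$-class contains an idempotent (necessarily unique, denoted $x^+$ for the class of $x$); right adequate if idempotents commute and every $\mathcal{L}^*$-class contains an idempotent ($x^*$); adequate if both. Trees: a $\Sigma$-tree is a finite directed graph whose underlying undirected graph is a tree, edges labelled by elements of $\Sigma$, with distinguished start and end vertices such that there is a (possibly empty) directed path from start to end vertex. A morphism $X\to Y$ maps vertices to vertices and edges to edges, preserving initial vertex, terminal vertex and label of edges and mapping start/end vertex to start/end vertex; isomorphisms are morphisms bijective on vertices and edges. A retraction is an idempotent morphism $X\to X$, its image being a retract; $X$ is pruned if it has no non-identity retraction. Every tree $X$ has a pruned retract, unique up to isomorphism, with isomorphism type $\overline{X}$. $T^1(\Sigma)$ is the set of isomorphism types of pruned $\Sigma$-trees. Unpruned operations: $X\times Y$ identifies the end vertex of (a copy of) $X$ with the start vertex of (a disjoint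 copy of) $Y$, start vertex that of $X$, end vertex that of $Y$; $X^{(+)}$ is $X$ with end vertex moved to the start vertex; $X^{( * )}$ is $X$ with start vertex moved to the end vertex. Pruned operations: $XY=\overline{X\times Y}$, $X^+=\overline{X^{(+)}}$, $X^*=\overline{X^{( * )}}$. *)

From HB Require Import structures.
From mathcomp Require Import all_boot.
Set Implicit Arguments. Unset Strict Implicit. Unset Printing Implicit Defensive.

Section Trees.
Variable Sigma : Type.

Record graph := Graph {
  V : finType; E : finType;
  src : E -> V; tgt : E -> V; lab : E -> Sigma;
  st : V; en : V }.
Arguments st g : clear implicits.
Arguments en g : clear implicits.

Inductive uconn (X : graph) : V X -> V X -> Prop :=
| uconn_refl v : uconn v v
| uconn_fwd e w : uconn (tgt e) w -> uconn (src e) w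
| uconn_bwd e w : uconn (src e) w -> uconn (tgt e) w.

Inductive dpath (X : graph) : V X -> V X -> Prop :=
| dpath_refl v : dpath v v
| dpath_step e w : dpath (tgt e) w -> dpath (src e) w.

Definition is_tree (X : graph) : Prop :=
  (forall u v : V X, uconn u v) /\ #|V X| = #|E X|.+1 /\ dpath (st X) (en X).

Record morph (X Y : graph) := Morph {
  mv : V X -> V Y; me : E X -> E Y;
  m_src : forall e, src (me e) = mv (src e);
  m_tgt : forall e, tgt (me e) = mv (tgt e);
  m_lab : forall e, lab (me e) = lab e;
  m_st : mv (st X) = st Y;
  m_en : mv (en X) = en Y }.

Definition iso (X Y : graph) : Prop :=
  exists f : morph X Y, bijective (mv f) /\ bijective (me f).

Definition retraction (X : graph) (r : morph X X) : Prop :=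
  (forall v, mv r (mv r v) = mv r v) /\ (forall e, me r (me r e) = me r e).

Definition pruned (X : graph) : Prop :=
  forall r : morph X X, retraction r ->
    (forall v, mv r v = v) /\ (forall e, me r e = e).

(* the image (retract) of an endomorphism, as the subgraph of fixed points *)
Section Image.
Variables (X : graph) (r : morph X X).
Definition imV := {v : V X | mv r v == v}.
Definition imE := {e : E X | me r e == e}.
Lemma im_src_fix (e : imE) : mv r (src (val e)) == src (val e).
Proof. by rewrite -m_src (eqP (valP e)). Qed.
Lemma im_tgt_fix (e : imE) : mv r (tgt (val e)) == tgt (val e).
Proof. by rewrite -m_tgt (eqP (valP e)). Qed.
Lemma im_st_fix : mv r (st X) == st X. Proof. by rewrite m_st. Qed.
Lemma im_en_fix : mv r (en X) == en X. Proof. by rewrite m_en. Qed.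
Definition image : graph :=
  @Graph imV imE
    (fun e => exist _ (src (val e)) (im_src_fix e))
    (fun e => exist _ (tgt (val e)) (im_tgt_fix e))
    (fun e => lab (val e))
    (exist _ (st X) im_st_fix) (exist _ (en X) im_en_fix).
End Image.

Definition prunes (W Z : graph) : Prop :=
  exists r : morph W W, retraction r /\ pruned (image r) /\ iso (image r) Z.

(* unpruned product X x Y: end vertex of X glued to start vertex of Y *)
Section Prod.
Variables X Y : graph.
Definition prodV := (V X + {v : V Y | v != st Y})%type.
Definition inj2 (v : V Y) : prodV :=
  match insub v with Some w => inr w | None => inl (en X) end.
Definition prodT : graph :=
  @Graph prodV (E X + E Y)%type
    (fun e => match e with inl e => inl (src e) | inr e => inj2 (src e) end)
    (fun e => match e with inl e => inl (tgt e) | inr e => inj2 (tgt e) end)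
    (fun e => match e with inl e => lab e | inr e => lab e end)
    (inl (st X)) (inj2 (en Y)).
End Prod.

Definition plusT (X : graph) : graph :=
  @Graph (V X) (E X) (@src X) (@tgt X) (@lab X) (st X) (st X).
Definition starT (X : graph) : graph :=
  @Graph (V X) (E X) (@src X) (@tgt X) (@lab X) (en X) (en X).

(* Isomorphism types are represented as the (Prop-valued) class of all
   graphs isomorphic to a representative. *)
Definition tclass := graph -> Prop.
Definition isoclass (X : graph) : tclass := fun Y => iso X Y.

Definition T1 (C : tclass) : Prop :=
  exists X, is_tree X /\ pruned X /\ C = isoclass X.

Definition tmul (C D : tclass) : tclass :=
  fun Z => exists X Y, C X /\ D Y /\ prunes (prodT X Y) Z.
Definition tplus (C : tclass) : tclass :=
  fun Z => exists X, C X /\ prunes (plusT X) Z.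
Definition tstar (C : tclass) : tclass :=
  fun Z => exists X, C X /\ prunes (starT X) Z.

End Trees.

Section Semigroups.
Variables (A : Type) (S : A -> Prop) (m : A -> A -> A).

Definition is_subsemigroup : Prop :=
  (forall a b, S a -> S b -> S (m a b)) /\
  (forall a b c, S a -> S b -> S c -> m a (m b c) = m (m a b) c).

Definition idem (e : A) : Prop := m e e = e.

Definition idems_commute : Prop :=
  forall e f, S e -> S f -> idem e -> idem f -> m e f = m f e.

(* elements of S^1: None is the identity (adjoined; if S is already a
   monoid, quantifying over it as well yields the same relations) *)
Definition inS1 (x : option A) : Prop :=
  match x with None => True | Some y => S y end.
Definition rmul (a : A) (x : option A) : A :=
  match x with None => a | Some y => m a y end.
Definition lmul (x : option A) (a : A) : A :=
  match x with None => a | Some y => m y a end.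

Definition Lstar (a b : A) : Prop :=
  forall x y, inS1 x -> inS1 y -> (rmul a x = rmul a y <-> rmul b x = rmul b y).
Definition Rstar (a b : A) : Prop :=
  forall x y, inS1 x -> inS1 y -> (lmul x a = lmul y a <-> lmul x b = lmul y b).

Definition left_adequate : Prop :=
  is_subsemigroup /\ idems_commute /\
  forall a, S a -> exists e, S e /\ idem e /\ Rstar a e.
Definition right_adequate : Prop :=
  is_subsemigroup /\ idems_commute /\
  forall a, S a -> exists e, S e /\ idem e /\ Lstar a e.
Definition adequate : Prop := left_adequate /\ right_adequate.

Definition plus_is_Rstar_idem (p : A -> A) : Prop :=
  forall a, S a -> S (p a) /\ idem (p a) /\ Rstar a (p a).
Definition star_is_Lstar_idem (s : A -> A) : Prop :=
  forall a, S a -> S (s a) /\ idem (s a) /\ Lstar a (s a).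

End Semigroups.

From Pilot Require Import Defs.
From mathcomp Require Import all_boot zify.
From Stdlib Require Import FunctionalExtensionality PropExtensionality.
Set Implicit Arguments. Unset Strict Implicit. Unset Printing Implicit Defensive.

(* Pruned graphs are cores: every endomorphism of a pruned graph is bijective (some
   power of it is a retraction), so pruned graphs with morphisms both ways are
   isomorphic. The pruned operations can thus be computed on arbitrary representatives
   up to homomorphic equivalence, under which the unpruned product is associative,
   [X^(+) X] and [X X^*] collapse to [X], and an idempotent tree has equal start and
   end vertices, so idempotents commute. For the adequacy conditions one shows that a
   morphism [U X -> V X] between products of trees fixes the junction vertex, as in a
   tree the vertex at a given depth on a directed walk to a given vertex is unique;
   hence it is also a morphism [U X^(+) -> V X^(+)], and dually for [X^*]. *)

Section PrunedTrees.
Variable Sigma : Type.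
Local Notation graph := (graph Sigma).
Implicit Types X Y Z W : graph.

Definition morph_id X : morph X X :=
  @Morph _ X X id id (fun _ => erefl) (fun _ => erefl) (fun _ => erefl) erefl erefl.

Definition morph_comp X Y Z (g : morph Y Z) (f : morph X Y) : morph X Z.
Proof.
refine (@Morph _ X Z (mv g \o mv f) (me g \o me f) _ _ _ _ _) => [e|e|e||] /=.
- by rewrite !m_src.
- by rewrite !m_tgt.
- by rewrite !m_lab.
- by rewrite !m_st.
- by rewrite !m_en.
Defined.

Definition hom X Y : Prop := inhabited (morph X Y).
Definition homeq X Y : Prop := hom X Y /\ hom Y X.

Lemma hom_refl X : hom X X. Proof. exact: inhabits (morph_id X). Qed.
Lemma hom_trans X Y Z : hom X Y -> hom Y Z -> hom X Z.
Proof. by move=> [f] [g]; exists; exact: morph_comp g f. Qed.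

Lemma homeq_refl X : homeq X X. Proof. by split; apply: hom_refl. Qed.
Lemma homeq_sym X Y : homeq X Y -> homeq Y X. Proof. by case. Qed.
Lemma homeq_trans X Y Z : homeq X Y -> homeq Y Z -> homeq X Z.
Proof. by move=> [hXY hYX] [hYZ hZY]; split; apply: hom_trans; eassumption. Qed.

(** * Pruned graphs are cores *)

Lemma iter_eventually_periodic (T : finType) (f : T -> T) :
  exists i p, 0 < p /\ forall x, iter (i + p) f x = iter i f x.
Proof.
pose pow (n : 'I_#|{ffun T -> T}|.+1) := [ffun x => iter n f x].
have /injectivePn[i [j neq_ij eq_ij]] : ~~ injectiveb pow.
  by apply/injectiveP => /leq_card; rewrite card_ord ltnn.
have {}eq_ij x : iter i f x = iter j f x by move/ffunP: eq_ij => /(_ x); rewrite !ffunE.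
case: (ltngtP i j) => [lt_ij|lt_ji|/val_inj eq]; last by rewrite eq eqxx in neq_ij.
- by exists i, (j - i); split=> [|x]; rewrite ?subn_gt0 ?subnKC ?(ltnW lt_ij).
- by exists j, (i - j); split=> [|x]; rewrite ?subn_gt0 ?subnKC ?(ltnW lt_ji).
Qed.

Lemma iter_idempotent_power (T : finType) (f : T -> T) :
  exists k, 0 < k /\ forall x, iter (k + k) f x = iter k f x.
Proof.
have [i [p [p_gt0 per]]] := iter_eventually_periodic f.
have periodic q n x : i <= n -> iter (n + p * q) f x = iter n f x.
  elim: q n => [|q IHq] n le_in; first by rewrite muln0 addn0.
  rewrite mulnS addnCA iterD IHq // -iterD addnC -(subnK le_in) -addnA iterD per.
  by rewrite -iterD.
exists (p * i.+1); split; first by rewrite muln_gt0 p_gt0.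
by move=> x; rewrite periodic // (leq_trans (leqnSn i)) // leq_pmull.
Qed.

Fixpoint morph_pow X (h : morph X X) n : morph X X :=
  if n is n'.+1 then morph_comp h (morph_pow h n') else morph_id X.

Lemma mv_pow X (h : morph X X) n v : mv (morph_pow h n) v = iter n (mv h) v.
Proof. by elim: n => //= n ->. Qed.
Lemma me_pow X (h : morph X X) n e : me (morph_pow h n) e = iter n (me h) e.
Proof. by elim: n => //= n ->. Qed.

Lemma pruned_endo_bij X (h : morph X X) :
  pruned X -> bijective (mv h) /\ bijective (me h).
Proof.
move=> prX.
pose F (s : V X + E X) := match s with inl v => inl (mv h v) | inr e => inr (me h e) end.
have Fv n v : iter n F (inl v) = inl (iter n (mv h) v) by elim: n => //= n ->.
have Fe n e : iter n F (inr e) = inr (iter n (me h) e) by elim: n => //= n ->.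
have [[|k] [// _ idemF]] := iter_idempotent_power F.
have [idv ide] : (forall v, mv (morph_pow h k.+1) v = v) /\
                 (forall e, me (morph_pow h k.+1) e = e).
  apply: prX; split=> [v|e]; rewrite ?mv_pow ?me_pow -iterD.
  - by have := idemF (inl v); rewrite !Fv => -[].
  - by have := idemF (inr e); rewrite !Fe => -[].
split; [exists (iter k (mv h)) => v | exists (iter k (me h)) => e].
- by have := idv v; rewrite mv_pow -iterSr.
- by have := idv v; rewrite mv_pow.
- by have := ide e; rewrite me_pow -iterSr.
- by have := ide e; rewrite me_pow.
Qed.

Lemma endo_bij_pruned X :
  (forall h : morph X X, bijective (mv h) /\ bijective (me h)) -> pruned X.
Proof.
move=> bij r [rv re]; have [[gv _ gvK] [ge _ geK]] := bij r.
by split=> [v|e]; [rewrite -[v]gvK rv | rewrite -[e]geK re].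
Qed.

Lemma morph_inv X Y (f : morph X Y) : bijective (mv f) -> bijective (me f) ->
  exists g : morph Y X, [/\ cancel (mv f) (mv g), cancel (mv g) (mv f),
                            cancel (me f) (me g) & cancel (me g) (me f)].
Proof.
case=> gv fvK gvK [ge feK geK].
have gsrc e : src (ge e) = gv (src e).
  by apply: (can_inj fvK); rewrite -m_src gvK geK.
have gtgt e : tgt (ge e) = gv (tgt e).
  by apply: (can_inj fvK); rewrite -m_tgt gvK geK.
have glab e : lab (ge e) = lab e by rewrite -{2}(geK e) m_lab.
have gst : gv (st Y) = st X by rewrite -(m_st f) fvK.
have gen : gv (en Y) = en X by rewrite -(m_en f) fvK.
by exists (Morph gsrc gtgt glab gst gen).
Qed.

Lemma iso_refl X : iso X X.
Proof. by exists (morph_id X); split; exists id. Qed.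

Lemma iso_sym X Y : iso X Y -> iso Y X.
Proof.
move=> [f [bv be]]; have [g [? ? ? ?]] := morph_inv bv be.
by exists g; split; [exists (mv f) | exists (me f)].
Qed.

Lemma iso_trans X Y Z : iso X Y -> iso Y Z -> iso X Z.
Proof.
by move=> [f [bfv bfe]] [g [bgv bge]]; exists (morph_comp g f); split; apply: bij_comp.
Qed.

Lemma iso_homeq X Y : iso X Y -> homeq X Y.
Proof. by move=> /[dup] [[f _]] /iso_sym [g _]; split; exists. Qed.

Lemma iso_pruned X Y : iso X Y -> pruned X -> pruned Y.
Proof.
move=> [f [bv be]] prX; have [g [fvK gvK feK geK]] := morph_inv bv be.
apply: endo_bij_pruned => h.
have [bhv bhe] := pruned_endo_bij (morph_comp g (morph_comp h f)) prX.
split.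
- apply: (@eq_bij _ _ (mv f \o mv (morph_comp g (morph_comp h f)) \o mv g)) => [|v].
    by apply: bij_comp; [apply: bij_comp | exists (mv f)].
  by rewrite /= !gvK.
- apply: (@eq_bij _ _ (me f \o me (morph_comp g (morph_comp h f)) \o me g)) => [|e].
    by apply: bij_comp; [apply: bij_comp | exists (me f)].
  by rewrite /= !geK.
Qed.

Lemma homeq_pruned_iso X Y : pruned X -> pruned Y -> homeq X Y -> iso X Y.
Proof.
move=> prX prY [[f] [g]]; exists f.
have [[a gfvK _] [a' gfeK _]] := pruned_endo_bij (morph_comp g f) prX.
have [[b _ fgvK] [b' _ fgeK]] := pruned_endo_bij (morph_comp f g) prY.
split; [exists (mv g \o b) | exists (me g \o b')] => [x||x|] //=.
- by apply: (can_inj gfvK) => /=; congr (mv g _); exact: fgvK.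
- by apply: (can_inj gfeK) => /=; congr (me g _); exact: fgeK.
Qed.

Lemma prunes_homeq W Z : prunes W Z -> homeq W Z /\ pruned Z.
Proof.
move=> [r [[rv re] [prim isoZ]]]; split; last exact: iso_pruned isoZ prim.
apply: homeq_trans (iso_homeq isoZ); split; last first.
  by exists; exact: (@Morph _ (Defs.image r) W val val (fun _ => erefl) (fun _ => erefl)
     (fun _ => erefl) erefl erefl).
pose pv v : V (Defs.image r) := exist _ (mv r v) (introT eqP (rv v)).
pose pe e : E (Defs.image r) := exist _ (me r e) (introT eqP (re e)).
have psrc e : src (pe e) = pv (src e) by apply: val_inj; rewrite /= m_src.
have ptgt e : tgt (pe e) = pv (tgt e) by apply: val_inj; rewrite /= m_tgt.
have plab e : lab (pe e) = lab e by rewrite /= m_lab.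
have pst : pv (st W) = st (Defs.image r) by apply: val_inj; rewrite /= m_st.
have pen : pv (en W) = en (Defs.image r) by apply: val_inj; rewrite /= m_en.
by exists; exact: Morph psrc ptgt plab pst pen.
Qed.

(** * Unpruned products *)

Lemma inj2_st X Y : inj2 X (st Y) = inl (en X).
Proof. by rewrite /inj2 insubF // eqxx. Qed.

Lemma inj2_ne X Y (v : V Y) (nv : v != st Y) : inj2 X v = inr (exist _ v nv).
Proof. by rewrite /inj2 (insubT (fun v => v != st Y) nv). Qed.

Lemma inr_inj2 X Y (w : {v : V Y | v != st Y}) : inr w = inj2 X (val w).
Proof. by case: w => v nv; rewrite (inj2_ne X nv). Qed.

Lemma hom_prodT_glue X Y Z (fv : V X -> V Z) (fe : E X -> E Z)
    (gv : V Y -> V Z) (ge : E Y -> E Z) :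
  (forall e, src (fe e) = fv (src e)) -> (forall e, tgt (fe e) = fv (tgt e)) ->
  (forall e, lab (fe e) = lab e) ->
  (forall e, src (ge e) = gv (src e)) -> (forall e, tgt (ge e) = gv (tgt e)) ->
  (forall e, lab (ge e) = lab e) ->
  fv (en X) = gv (st Y) -> fv (st X) = st Z -> gv (en Y) = en Z ->
  hom (prodT X Y) Z.
Proof.
move=> fsrc ftgt flab gsrc gtgt glab glue fst gen.
pose hv (v : V (prodT X Y)) := match v with inl x => fv x | inr w => gv (val w) end.
have hv_inj2 v : hv (inj2 X v) = gv v.
  by case: (eqVneq v (st Y)) => [->|nv]; rewrite ?inj2_st ?(inj2_ne X nv).
pose he (e : E (prodT X Y)) := match e with inl e => fe e | inr e => ge e end.
have hsrc e : src (he e) = hv (src e) by case: e => e /=; rewrite ?hv_inj2.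
have htgt e : tgt (he e) = hv (tgt e) by case: e => e /=; rewrite ?hv_inj2.
have hlab e : lab (he e) = lab e by case: e.
have hst : hv (st (prodT X Y)) = st Z by [].
have hen : hv (en (prodT X Y)) = en Z by rewrite /= hv_inj2.
by exists; exact: Morph hsrc htgt hlab hst hen.
Qed.

Lemma hom_prodT X X' Y Y' : hom X X' -> hom Y Y' -> hom (prodT X Y) (prodT X' Y').
Proof.
move=> [f] [g].
apply: (@hom_prodT_glue X Y (prodT X' Y') (fun v => inl (mv f v)) (fun e => inl (me f e))
  (fun v => inj2 X' (mv g v)) (fun e => inr (me g e))) => [e|e|e|e|e|e|||] /=;
  by rewrite ?m_src ?m_tgt ?m_lab ?m_st ?m_en ?inj2_st.
Qed.

Lemma homeq_prodT X X' Y Y' :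
  homeq X X' -> homeq Y Y' -> homeq (prodT X Y) (prodT X' Y').
Proof. by move=> [? ?] [? ?]; split; apply: hom_prodT. Qed.

Lemma hom_inl X Y : st Y = en Y -> hom X (prodT X Y).
Proof.
move=> stY; have inl_en : inl (en X) = en (prodT X Y) by rewrite /= -stY inj2_st.
by exists; exact: (@Morph _ X (prodT X Y) inl inl
  (fun _ => erefl) (fun _ => erefl) (fun _ => erefl) erefl inl_en).
Qed.

Lemma hom_inj2 X Y : st X = en X -> hom Y (prodT X Y).
Proof.
move=> stX; have inj2_st' : inj2 X (st Y) = st (prodT X Y) by rewrite inj2_st /= stX.
by exists; exact: (@Morph _ Y (prodT X Y) (@inj2 _ X Y) inr
  (fun _ => erefl) (fun _ => erefl) (fun _ => erefl) inj2_st' erefl).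
Qed.

Lemma homeq_prodTA X Y Z : homeq (prodT (prodT X Y) Z) (prodT X (prodT Y Z)).
Proof.
split.
- pose fv (v : V (prodT X Y)) : V (prodT X (prodT Y Z)) :=
    match v with inl x => inl x | inr w => @inj2 _ X (prodT Y Z) (inl (val w)) end.
  have fv_inj2 v : fv (inj2 X v) = @inj2 _ X (prodT Y Z) (inl v).
    case: (eqVneq v (st Y)) => [->|nv]; last by rewrite (inj2_ne X nv).
    by rewrite !inj2_st.
  apply: (@hom_prodT_glue (prodT X Y) Z (prodT X (prodT Y Z)) fv
    (fun e => match e with inl e => inl e | inr e => inr (inl e) end)
    (fun v => @inj2 _ X (prodT Y Z) (inj2 Y v)) (fun e => inr (inr e)))
    => [[]e|[]e|[]e|e|e|e|||] //=;
    by rewrite ?fv_inj2 ?inj2_st; reflexivity.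
- pose gv (v : V (prodT Y Z)) : V (prodT (prodT X Y) Z) :=
    match v with inl y => inl (inj2 X y) | inr w => inj2 (prodT X Y) (val w) end.
  have gv_inj2 v : gv (inj2 Y v) = inj2 (prodT X Y) v.
    case: (eqVneq v (st Z)) => [->|nv]; last by rewrite (inj2_ne Y nv).
    by rewrite !inj2_st.
  apply: (@hom_prodT_glue X (prodT Y Z) (prodT (prodT X Y) Z)
    (fun v => inl (inl v)) (fun e => inl (inl e)) gv
    (fun e => match e return E (prodT (prodT X Y) Z) with
              | inl e => inl (inr e) | inr e => inr e end))
    => [e|e|e|[]e|[]e|[]e|||] //=; by rewrite ?gv_inj2 ?inj2_st; reflexivity.
Qed.

Definition unit_graph : graph :=
  @Graph Sigma unit void (fun e => match e with end) (fun e => match e with end)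
    (fun e => match e with end) tt tt.

Lemma homeq_unit_prodT X : homeq (prodT unit_graph X) X.
Proof.
split; last exact: hom_inj2.
by apply: (@hom_prodT_glue unit_graph X X (fun _ => st X) (fun e : void => match e with end) id id).
Qed.

Lemma homeq_prodT_unit X : homeq (prodT X unit_graph) X.
Proof.
split; last exact: hom_inl.
by apply: (@hom_prodT_glue X unit_graph X id id (fun _ => en X) (fun e : void => match e with end)).
Qed.

Lemma homeq_plusT_prodT X : homeq (prodT (plusT X) X) X.
Proof. by split; [apply: (@hom_prodT_glue (plusT X) X X id id id id) | apply: hom_inj2]. Qed.

Lemma homeq_prodT_starT X : homeq (prodT X (starT X)) X.
Proof. by split; [apply: (@hom_prodT_glue X (starT X) X id id id id) | apply: hom_inl]. Qed.

Lemma hom_prodT_swap X Y : st X = en X -> st Y = en Y -> hom (prodT X Y) (prodT Y X).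
Proof.
move=> stX stY.
apply: (@hom_prodT_glue X Y (prodT Y X) (@inj2 _ Y X) inr inl inl) => //=;
  by rewrite ?inj2_st -?stX ?inj2_st ?stY.
Qed.

Lemma hom_plusT X Y : hom X Y -> hom (plusT X) (plusT Y).
Proof.
by move=> [f]; exists; exact: (@Morph _ (plusT X) (plusT Y) (mv f) (me f)
  (m_src f) (m_tgt f) (m_lab f) (m_st f) (m_st f)).
Qed.

Lemma hom_starT X Y : hom X Y -> hom (starT X) (starT Y).
Proof.
by move=> [f]; exists; exact: (@Morph _ (starT X) (starT Y) (mv f) (me f)
  (m_src f) (m_tgt f) (m_lab f) (m_en f) (m_en f)).
Qed.

(** * Directed walks in trees *)

Inductive dwalk X : V X -> V X -> nat -> Prop :=
| dwalk0 v : dwalk v v 0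
| dwalkS e w n : dwalk (tgt e) w n -> dwalk (src e) w n.+1.

Lemma dwalk_cat X (u v w : V X) m n : dwalk u v m -> dwalk v w n -> dwalk u w (m + n).
Proof. by elim=> // e v' k _ IH /IH; apply: dwalkS. Qed.

Lemma dwalk_rcons X (u : V X) e n : dwalk u (src e) n -> dwalk u (tgt e) n.+1.
Proof. by move=> walk_ue; rewrite -addn1; apply: dwalk_cat walk_ue (dwalkS (dwalk0 _)). Qed.

Lemma dwalk0_eq X (u w : V X) : dwalk u w 0 -> u = w.
Proof. by move=> walk_uw; inversion walk_uw. Qed.

Lemma dwalk_last X (u w : V X) n :
  dwalk u w n.+1 -> exists2 e, tgt e = w & dwalk u (src e) n.
Proof.
move=> walk_uw.
suff gen k : dwalk u w k -> forall n, k = n.+1 -> exists2 e, tgt e = w & dwalk u (src e) n.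
  exact: gen _ walk_uw n erefl.
move=> {n walk_uw}; elim=> // e w' [|j] walk_tw IH n [<-].
  by exists e; [exact: dwalk0_eq | exact: dwalk0].
by have [e' te' walk'] := IH j erefl; exists e' => //; apply: dwalkS.
Qed.

Lemma dpath_dwalk X (u w : V X) : dpath u w <-> exists n, dwalk u w n.
Proof.
split; first by elim=> [v|e w' _ [n walk]]; [exists 0; apply: dwalk0 | exists n.+1; apply: dwalkS].
by case=> n; elim=> [v|e w' k _ IH]; [apply: dpath_refl | apply: dpath_step].
Qed.

Lemma uconn_trans X (u v w : V X) : uconn u v -> uconn v w -> uconn u w.
Proof. by elim=> // e w' _ IH /IH; [apply: uconn_fwd | apply: uconn_bwd]. Qed.

Lemma uconn_sym X (u w : V X) : uconn u w -> uconn w u.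
Proof.
elim=> [v|e w' _ IH|e w' _ IH]; first exact: uconn_refl.
- by apply: uconn_trans IH _; apply/uconn_bwd/uconn_refl.
- by apply: uconn_trans IH _; apply/uconn_fwd/uconn_refl.
Qed.

Section GraphMap.
Variables (X Y : graph) (fv : V X -> V Y) (fe : E X -> E Y).
Hypotheses (fsrc : forall e, src (fe e) = fv (src e))
           (ftgt : forall e, tgt (fe e) = fv (tgt e)).

Lemma map_dwalk u w n : dwalk u w n -> dwalk (fv u) (fv w) n.
Proof.
elim=> [v|e w' k _ IH]; first exact: dwalk0.
by rewrite -fsrc; apply: dwalkS; rewrite ftgt.
Qed.

Lemma map_uconn u w : uconn u w -> uconn (fv u) (fv w).
Proof.
elim=> [v|e w' _ IH|e w' _ IH]; first exact: uconn_refl.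
- by rewrite -fsrc; apply: uconn_fwd; rewrite ftgt.
- by rewrite -ftgt; apply: uconn_bwd; rewrite fsrc.
Qed.
End GraphMap.

Lemma morph_dwalk X Y (f : morph X Y) u w n : dwalk u w n -> dwalk (mv f u) (mv f w) n.
Proof. exact: (@map_dwalk X Y (mv f) (me f) (m_src f) (m_tgt f)). Qed.

Lemma dwalk_inl X Y (u w : V X) n : dwalk u w n -> dwalk (inl u : V (prodT X Y)) (inl w) n.
Proof. exact: (@map_dwalk X (prodT X Y) inl inl). Qed.

Lemma dwalk_inj2 X Y (u w : V Y) n : dwalk u w n -> @dwalk (prodT X Y) (inj2 X u) (inj2 X w) n.
Proof. exact: (@map_dwalk Y (prodT X Y) (@inj2 _ X Y) inr). Qed.

(* Each vertex other than the root [st T] has an incident edge to a vertex one layer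
   closer to the root; since |V| = |E| + 1 these parent edges exhaust [E T]. Along a
   directed walk from the root every edge is therefore the parent edge of its target,
   which makes depths and walks towards the root unique. *)
Section RootedTree.
Variable T : graph.
Hypothesis connT : forall u v : V T, uconn u v.
Hypothesis cardT : #|V T| = #|E T|.+1.
Local Notation root := (st T).

Definition incident (e : E T) (v : V T) := (src e == v) || (tgt e == v).
Definition other_end (e : E T) (v : V T) := if src e == v then tgt e else src e.

Fixpoint layer n : {set V T} :=
  if n is n'.+1 then
    layer n' :|: [set v | [exists e, incident e v && (other_end e v \in layer n')]]
  else [set root].

Lemma layerS e v n : incident e v -> other_end e v \in layer n -> v \in layer n.+1.
Proof.
by move=> inc_ev other_in; rewrite !inE; apply/orP; right; apply/existsP; exists e; rewrite inc_ev.
Qed.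

Lemma layer_exists v : exists n, v \in layer n.
Proof.
suff reach u w : uconn u w -> w = root -> exists n, u \in layer n.
  exact: reach (connT v root) erefl.
elim=> [v' ->|e w' _ IH /IH [n Hn]|e w' _ IH /IH [n Hn]]; first by exists 0; rewrite inE.
- by exists n.+1; apply: (@layerS e); rewrite /incident /other_end ?eqxx.
- exists n.+1; apply: (@layerS e); first by rewrite /incident eqxx orbT.
  by rewrite /other_end; case: ifP => [/eqP <-|].
Qed.

Definition depth v := ex_minn (layer_exists v).

Lemma depth_layer v : v \in layer (depth v).
Proof. by rewrite /depth; case: ex_minnP. Qed.

Lemma depth_min v n : v \in layer n -> depth v <= n.
Proof. by rewrite /depth; case: ex_minnP => m _ min_m /min_m. Qed.

Lemma depth_root : depth root = 0.
Proof. by apply/eqP; rewrite -leqn0; apply: depth_min; rewrite inE. Qed.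

Definition parent_edge_of (v : V T) (e : E T) :=
  incident e v && ((depth (other_end e v)).+1 == depth v).

Lemma parent_edge_exists v : v != root -> exists e, parent_edge_of v e.
Proof.
move=> v_nroot; have := depth_layer v.
case def_d: (depth v) => [|n]; first by rewrite inE (negbTE v_nroot).
rewrite /= !inE => /orP[v_in|/existsP[e /andP[inc other_in]]].
  by have := depth_min v_in; rewrite def_d ltnn.
exists e; rewrite /parent_edge_of inc def_d eqSS eqn_leq depth_min //= -ltnS -def_d.
exact: depth_min (layerS inc (depth_layer _)).
Qed.

Definition parent_edge v := [pick e | parent_edge_of v e].

Lemma parent_edgeP v e :
  parent_edge v = Some e -> incident e v /\ (depth (other_end e v)).+1 = depth v.
Proof. by rewrite /parent_edge; case: pickP => // e' /andP[inc /eqP d_e'] [<-]. Qed.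

Lemma parent_edge_nroot v : v != root -> exists e, parent_edge v = Some e.
Proof.
move=> /parent_edge_exists[e pe_e]; rewrite /parent_edge.
by case: pickP => [e' _|/(_ e)]; [exists e' | rewrite pe_e].
Qed.

Lemma parent_edge_root : parent_edge root = None.
Proof.
case pe_r: (parent_edge root) => [e|] //.
by have [_] := parent_edgeP pe_r; rewrite depth_root.
Qed.

Lemma other_end_incident e a b : a != b -> incident e a -> incident e b -> other_end e a = b.
Proof.
rewrite /incident /other_end => neq_ab.
case/orP=> /eqP eq_a; case/orP=> /eqP eq_b; subst; rewrite ?eqxx // in neq_ab *.
by rewrite eq_sym (negbTE neq_ab).
Qed.

Lemma parent_edge_inj v w e : parent_edge v = Some e -> parent_edge w = Some e -> v = w.
Proof.
move=> /parent_edgeP[inc_v d_v] /parent_edgeP[inc_w d_w].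
apply/eqP/negP => /negP neq_vw.
rewrite (other_end_incident neq_vw inc_v inc_w) in d_v.
rewrite (other_end_incident _ inc_w inc_v) 1?eq_sym // in d_w.
lia.
Qed.

Lemma parent_edge_surj e : exists v, parent_edge v = Some e.
Proof.
have inj_pe : {in [set~ root] &, injective parent_edge}.
  move=> v w; rewrite !inE => /parent_edge_nroot[e1 pe1] /parent_edge_nroot[e2 pe2].
  by rewrite pe1 pe2 => -[eq_e]; rewrite eq_e in pe1; apply: parent_edge_inj pe1 pe2.
have sub : parent_edge @: [set~ root] \subset Some @: [set: E T].
  apply/subsetP => x /imsetP[v]; rewrite !inE => v_nroot ->.
  by have [e' ->] := parent_edge_nroot v_nroot; apply/imsetP; exists e'.
have /eqP eq_im : parent_edge @: [set~ root] == Some @: [set: E T].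
  rewrite eqEcard sub (card_in_imset inj_pe) cardsC1 cardT card_imset ?cardsT //=.
  exact: Some_inj.
have : Some e \in parent_edge @: [set~ root] by rewrite eq_im; apply/imsetP; exists e.
by case/imsetP => v _ ->; exists v.
Qed.

Lemma dwalk_parent_edge n e :
  dwalk root (src e) n -> depth (tgt e) = n.+1 /\ parent_edge (tgt e) = Some e.
Proof.
elim: n e => [|n IHn] e walk_e.
  have src_e := dwalk0_eq walk_e.
  have [v pe_v] := parent_edge_surj e; have [inc d_v] := parent_edgeP pe_v.
  have v_nroot : v != root by apply: contraPneq pe_v => ->; rewrite parent_edge_root.
  move: inc d_v; rewrite /incident /other_end => /orP[] /eqP v_e.
    by rewrite -v_e -src_e eqxx in v_nroot.
  case: ifP => [/eqP src_v|_]; first by rewrite -src_v -src_e eqxx in v_nroot.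
  by rewrite -src_e depth_root v_e => <-.
have [e' tgt_e' walk_e'] := dwalk_last walk_e.
have [d_src pe_src] := IHn _ walk_e'; rewrite tgt_e' in d_src pe_src.
have [v pe_v] := parent_edge_surj e; have [inc d_v] := parent_edgeP pe_v.
move: inc d_v; rewrite /incident /other_end => /orP[] /eqP v_e; subst v.
  move: pe_v; rewrite pe_src => -[eq_e']; subst e'.
  by rewrite eqxx tgt_e' => /esym/n_Sn.
case: ifP => [/eqP src_tgt|_]; first by rewrite -src_tgt d_src; lia.
by rewrite d_src => <-.
Qed.

Lemma depth_dwalk v n : dwalk root v n -> depth v = n.
Proof.
case: n => [/dwalk0_eq <-|n]; first exact: depth_root.
by case/dwalk_last => e <- /dwalk_parent_edge[].
Qed.

Definition parent v := if parent_edge v is Some e then other_end e v else v.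

Lemma iter_parent u w k m : dwalk root u k -> dwalk u w m -> iter m parent w = u.
Proof.
move=> walk_ru walk_uw; elim: walk_uw k walk_ru => // e w' m' _ IH k walk_re.
have [d_tgt pe_tgt] := dwalk_parent_edge walk_re.
rewrite iterS (IH _ (dwalk_rcons walk_re)) /parent pe_tgt /other_end.
by case: ifP => // /eqP eq_st; move: d_tgt; rewrite -eq_st (depth_dwalk walk_re); lia.
Qed.

Lemma dwalk_root_unique u u' w k m m' :
  dwalk root u k -> dwalk u w m -> dwalk root u' k -> dwalk u' w m' -> u = u'.
Proof.
move=> walk_ru walk_uw walk_ru' walk_u'w.
have d_w := depth_dwalk (dwalk_cat walk_ru walk_uw).
have eq_m : m = m' by move: (depth_dwalk (dwalk_cat walk_ru' walk_u'w)); lia.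
by rewrite -(iter_parent walk_ru walk_uw) -(iter_parent walk_ru' walk_u'w) eq_m.
Qed.
End RootedTree.

Lemma tree_dwalk X : is_tree X -> exists n, dwalk (st X) (en X) n.
Proof. by case=> _ [_ /dpath_dwalk]. Qed.

Lemma tree_dwalk_length X v n n' :
  is_tree X -> dwalk (st X) v n -> dwalk (st X) v n' -> n = n'.
Proof.
move=> [conn [card _]] walk walk'.
by rewrite -(depth_dwalk conn card walk) (depth_dwalk conn card walk').
Qed.

Lemma tree_dwalk_unique X (u u' w : V X) k m m' : is_tree X ->
  dwalk (st X) u k -> dwalk u w m -> dwalk (st X) u' k -> dwalk u' w m' -> u = u'.
Proof. by move=> [conn [card _]]; apply: dwalk_root_unique. Qed.

Lemma dwalk_prodT X Y a b : dwalk (st X) (en X) a -> dwalk (st Y) (en Y) b ->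
  dwalk (st (prodT X Y)) (inl (en X)) a /\ @dwalk (prodT X Y) (inl (en X)) (en (prodT X Y)) b.
Proof. by move=> walkX /(dwalk_inj2 X); rewrite inj2_st => walkY; split=> //; apply: dwalk_inl. Qed.

Lemma tree_unit_graph : is_tree unit_graph.
Proof.
split; first by do 2!case; apply: uconn_refl.
by split; [rewrite /= card_unit card_void | apply: dpath_refl].
Qed.

Lemma tree_prodT X Y : is_tree X -> is_tree Y -> is_tree (prodT X Y).
Proof.
move=> treeX treeY; have [connX [cardX _]] := treeX; have [connY [cardY _]] := treeY.
have to_st (z : V (prodT X Y)) : uconn z (inl (st X)).
  have connl u : uconn (inl u : V (prodT X Y)) (inl (st X)).
    exact: (@map_uconn X (prodT X Y) inl inl).
  case: z => [//|w]; rewrite (inr_inj2 X); apply: uconn_trans (connl (en X)).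
  by rewrite -(inj2_st X Y); apply: (@map_uconn Y (prodT X Y) (@inj2 _ X Y) inr).
split; first by move=> u w; apply: uconn_trans (to_st u) (uconn_sym (to_st w)).
have [[a walkX] [b walkY]] := (tree_dwalk treeX, tree_dwalk treeY).
have [walk1 walk2] := dwalk_prodT walkX walkY.
split; last by apply/dpath_dwalk; exists (a + b); apply: dwalk_cat walk1 walk2.
have card_ne : #|{: {v : V Y | v != st Y}}| = #|V Y|.-1.
  by rewrite card_sig -(cardC1 (st Y)); apply: eq_card => y; rewrite !inE.
by rewrite /= !card_sum cardX card_ne cardY /=; lia.
Qed.

(* The start-to-end walk of [X x X], twice as long as that of [X], is mapped onto
   a start-to-end walk of [X]; depths in a tree are unique. *)
Lemma tree_idem_st_en X : is_tree X -> hom (prodT X X) X -> st X = en X.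
Proof.
move=> treeX [f]; have [b walkX] := tree_dwalk treeX.
have [walk1 walk2] := dwalk_prodT walkX walkX.
have := morph_dwalk f (dwalk_cat walk1 walk2); rewrite m_st m_en => walk_bb.
have b0 : b = 0 by have := tree_dwalk_length treeX walkX walk_bb; lia.
by rewrite b0 in walkX; apply: dwalk0_eq.
Qed.

(* A morphism between products of trees fixes the junction vertex: it is the only
   vertex at its distance from the start that reaches the end vertex. *)
Lemma morph_prodT_junction_r X Y Z (f : morph (prodT X Z) (prodT Y Z)) :
  is_tree X -> is_tree Y -> is_tree Z -> mv f (inl (en X)) = inl (en Y).
Proof.
move=> treeX treeY treeZ.
have [[a walkX] [a' walkY]] := (tree_dwalk treeX, tree_dwalk treeY).
have [b walkZ] := tree_dwalk treeZ.
have [walkX1 walkX2] := dwalk_prodT walkX walkZ; have [walkY1 walkY2] := dwalk_prodT walkY walkZ.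
have := morph_dwalk f walkX1; have := morph_dwalk f walkX2; rewrite m_st m_en => fwalk2 fwalk1.
have treeYZ := tree_prodT treeY treeZ.
have eq_a : a = a'.
  by have := tree_dwalk_length treeYZ (dwalk_cat fwalk1 fwalk2) (dwalk_cat walkY1 walkY2); lia.
by rewrite -eq_a in walkY1; apply: tree_dwalk_unique treeYZ fwalk1 fwalk2 walkY1 walkY2.
Qed.

Lemma morph_prodT_junction_l X Y Z (f : morph (prodT X Y) (prodT X Z)) :
  is_tree X -> is_tree Y -> is_tree Z -> mv f (inl (en X)) = inl (en X).
Proof.
move=> treeX treeY treeZ.
have [[b walkX] [a walkY]] := (tree_dwalk treeX, tree_dwalk treeY).
have [a' walkZ] := tree_dwalk treeZ.
have [walkY1 walkY2] := dwalk_prodT walkX walkY; have [walkZ1 walkZ2] := dwalk_prodT walkX walkZ.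
have := morph_dwalk f walkY1; have := morph_dwalk f walkY2; rewrite m_st m_en => fwalk2 fwalk1.
exact: tree_dwalk_unique (tree_prodT treeX treeZ) fwalk1 fwalk2 walkZ1 walkZ2.
Qed.

Lemma hom_prodT_plusT X Y Z : is_tree X -> is_tree Y -> is_tree Z ->
  hom (prodT X Z) (prodT Y Z) -> hom (prodT X (plusT Z)) (prodT Y (plusT Z)).
Proof.
move=> treeX treeY treeZ [f]; have junction := morph_prodT_junction_r f treeX treeY treeZ.
have f_en : mv f (en (prodT X (plusT Z))) = en (prodT Y (plusT Z)) by rewrite /= !inj2_st.
by exists; exact: (@Morph _ (prodT X (plusT Z)) (prodT Y (plusT Z)) (mv f) (me f)
  (m_src f) (m_tgt f) (m_lab f) (m_st f) f_en).
Qed.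

Lemma hom_starT_prodT X Y Z : is_tree X -> is_tree Y -> is_tree Z ->
  hom (prodT X Y) (prodT X Z) -> hom (prodT (starT X) Y) (prodT (starT X) Z).
Proof.
move=> treeX treeY treeZ [f]; have f_st := morph_prodT_junction_l f treeX treeY treeZ.
by exists; exact: (@Morph _ (prodT (starT X) Y) (prodT (starT X) Z) (mv f) (me f)
  (m_src f) (m_tgt f) (m_lab f) f_st (m_en f)).
Qed.

(** * Isomorphism types *)

Lemma isoclass_eq X Y : iso X Y -> isoclass X = isoclass Y.
Proof.
move=> isoXY; apply: functional_extensionality => Z; apply: propositional_extensionality.
by split; [apply: iso_trans (iso_sym isoXY) | apply: iso_trans isoXY].
Qed.

(* [C] is the isomorphism type of the pruned retract of [X], i.e. [C = overline X]. *)
Definition pruned_class X (C : tclass Sigma) : Prop :=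
  exists W, [/\ pruned W, C = isoclass W & homeq W X].

Lemma pruned_class_isoclass X : pruned X -> pruned_class X (isoclass X).
Proof. by exists X; split=> //; apply: homeq_refl. Qed.

Lemma pruned_class_mem X C Y : pruned_class X C -> C Y -> homeq Y X.
Proof. by move=> [W [_ -> homWX]] /iso_homeq/homeq_sym/homeq_trans; apply. Qed.

Lemma pruned_class_homeq X Y C : homeq X Y -> pruned_class X C -> pruned_class Y C.
Proof. by move=> homXY [W [prW defC homWX]]; exists W; split=> //; apply: homeq_trans homXY. Qed.

Lemma pruned_class_eq X Y C D :
  pruned_class X C -> pruned_class Y D -> homeq X Y -> C = D.
Proof.
move=> [W [prW -> homWX]] [W' [prW' -> homW'Y]] homXY; apply/isoclass_eq/homeq_pruned_iso => //.
by apply: homeq_trans homWX (homeq_trans homXY (homeq_sym homW'Y)).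
Qed.

Lemma pruned_class_uniq X Y C : pruned_class X C -> pruned_class Y C -> homeq X Y.
Proof.
move=> clX [W [_ defC homWY]]; apply: homeq_trans (homeq_sym _) homWY.
by apply: (pruned_class_mem clX); rewrite defC; apply: iso_refl.
Qed.

Lemma T1_pruned_class C : T1 C -> exists X, is_tree X /\ pruned_class X C.
Proof. by case=> X [treeX [prX ->]]; exists X; split=> //; apply: pruned_class_isoclass. Qed.

Lemma pruned_class_of_T1 C Y : T1 C -> (forall Z, C Z -> homeq Z Y) -> pruned_class Y C.
Proof.
move=> [W [_ [prW defC]]] homC; exists W; split=> //.
by apply: homC; rewrite defC; apply: iso_refl.
Qed.

Lemma pruned_class_tmul X Y C D : T1 (tmul C D) ->
  pruned_class X C -> pruned_class Y D -> pruned_class (prodT X Y) (tmul C D).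
Proof.
move=> T1CD clX clY; apply: pruned_class_of_T1 => // Z [X' [Y' [CX' [DY' /prunes_homeq[homZ _]]]]].
apply: homeq_trans (homeq_sym homZ) _.
exact: homeq_prodT (pruned_class_mem clX CX') (pruned_class_mem clY DY').
Qed.

Lemma pruned_class_tplus X C : T1 (tplus C) -> pruned_class X C -> pruned_class (plusT X) (tplus C).
Proof.
move=> T1C clX; apply: pruned_class_of_T1 => // Z [X' [CX' /prunes_homeq[homZ _]]].
have [homXX' homX'X] := pruned_class_mem clX CX'.
by apply: homeq_trans (homeq_sym homZ) _; split; apply: hom_plusT.
Qed.

Lemma pruned_class_tstar X C : T1 (tstar C) -> pruned_class X C -> pruned_class (starT X) (tstar C).
Proof.
move=> T1C clX; apply: pruned_class_of_T1 => // Z [X' [CX' /prunes_homeq[homZ _]]].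
have [homXX' homX'X] := pruned_class_mem clX CX'.
by apply: homeq_trans (homeq_sym homZ) _; split; apply: hom_starT.
Qed.

(** * Subsets of T^1 closed under the pruned operations *)

Section Closed.
Variable S : tclass Sigma -> Prop.
Hypothesis S_T1 : forall C, S C -> T1 C.
Hypothesis S_tmul : forall C D, S C -> S D -> S (tmul C D).

Lemma closed_pruned_class_tmul X Y C D : S C -> S D ->
  pruned_class X C -> pruned_class Y D -> pruned_class (prodT X Y) (tmul C D).
Proof. by move=> SC SD; apply/pruned_class_tmul/S_T1/S_tmul. Qed.

Lemma closed_tmul_subsemigroup : is_subsemigroup S (@tmul Sigma).
Proof.
split=> // C D E SC SD SE.
have [[X [_ clX]] [Y [_ clY]]] := (T1_pruned_class (S_T1 SC), T1_pruned_class (S_T1 SD)).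
have [Z [_ clZ]] := T1_pruned_class (S_T1 SE).
have clXY := closed_pruned_class_tmul SC SD clX clY.
have clYZ := closed_pruned_class_tmul SD SE clY clZ.
have clXY_Z := closed_pruned_class_tmul (S_tmul SC SD) SE clXY clZ.
have clX_YZ := closed_pruned_class_tmul SC (S_tmul SD SE) clX clYZ.
exact: pruned_class_eq clX_YZ clXY_Z (homeq_sym (homeq_prodTA X Y Z)).
Qed.

Lemma closed_idem_st_en C X : S C -> is_tree X -> pruned_class X C ->
  idem (@tmul Sigma) C -> st X = en X.
Proof.
move=> SC treeX clX idemC; apply: tree_idem_st_en => //.
have := closed_pruned_class_tmul SC SC clX clX; rewrite idemC => clXX.
by case: (pruned_class_uniq clXX clX).
Qed.

Lemma closed_idems_commute : idems_commute S (@tmul Sigma).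
Proof.
move=> C D SC SD idemC idemD.
have [[X [treeX clX]] [Y [treeY clY]]] := (T1_pruned_class (S_T1 SC), T1_pruned_class (S_T1 SD)).
have stX := closed_idem_st_en SC treeX clX idemC; have stY := closed_idem_st_en SD treeY clY idemD.
apply: pruned_class_eq (closed_pruned_class_tmul SC SD clX clY)
  (closed_pruned_class_tmul SD SC clY clX) _.
by split; apply: hom_prodT_swap.
Qed.

Lemma closed_lmul_pruned_class x : inS1 S x -> exists G, is_tree G /\
  forall C X, S C -> pruned_class X C -> pruned_class (prodT G X) (lmul (@tmul Sigma) x C).
Proof.
case: x => [D SD|_] /=.
  have [G [treeG clG]] := T1_pruned_class (S_T1 SD).
  by exists G; split=> // C X SC; apply: closed_pruned_class_tmul.
exists unit_graph; split=> [|C X _]; first exact: tree_unit_graph.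
exact/pruned_class_homeq/homeq_sym/homeq_unit_prodT.
Qed.

Lemma closed_rmul_pruned_class x : inS1 S x -> exists G, is_tree G /\
  forall C X, S C -> pruned_class X C -> pruned_class (prodT X G) (rmul (@tmul Sigma) C x).
Proof.
case: x => [D SD|_] /=.
  have [G [treeG clG]] := T1_pruned_class (S_T1 SD).
  by exists G; split=> // C X SC clX; apply: closed_pruned_class_tmul.
exists unit_graph; split=> [|C X _]; first exact: tree_unit_graph.
exact/pruned_class_homeq/homeq_sym/homeq_prodT_unit.
Qed.

Section Plus.
Hypothesis S_tplus : forall C, S C -> S (tplus C).

Lemma closed_tplus_idem C : S C -> idem (@tmul Sigma) (tplus C).
Proof.
move=> SC; have [X [_ clX]] := T1_pruned_class (S_T1 SC).
have clPX := pruned_class_tplus (S_T1 (S_tplus SC)) clX.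
have STC := S_tplus SC.
apply: pruned_class_eq (closed_pruned_class_tmul STC STC clPX clPX) clPX _.
exact: homeq_plusT_prodT (plusT X).
Qed.

(* [G X^(+) X] collapses to [G X]; the converse direction needs the junction lemma. *)
Lemma closed_tplus_Rstar C : S C -> Rstar S (@tmul Sigma) C (tplus C).
Proof.
move=> SC x y Sx Sy; have [X [treeX clX]] := T1_pruned_class (S_T1 SC).
have clPX := pruned_class_tplus (S_T1 (S_tplus SC)) clX.
have [[Gx [treeGx clGx]] [Gy [treeGy clGy]]] :=
  (closed_lmul_pruned_class Sx, closed_lmul_pruned_class Sy).
have absorb G : homeq (prodT (prodT G (plusT X)) X) (prodT G X).
  exact: homeq_trans (homeq_prodTA _ _ _) (homeq_prodT (homeq_refl G) (homeq_plusT_prodT X)).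
split=> eq_xy.
- apply: pruned_class_eq (clGx _ _ (S_tplus SC) clPX) (clGy _ _ (S_tplus SC) clPX) _.
  have [hom_xy hom_yx] : homeq (prodT Gx X) (prodT Gy X).
    by apply: pruned_class_uniq (clGx _ _ SC clX) _; rewrite eq_xy; apply: clGy.
  by split; apply: hom_prodT_plusT.
- apply: pruned_class_eq (clGx _ _ SC clX) (clGy _ _ SC clX) _.
  have hom_xy : homeq (prodT Gx (plusT X)) (prodT Gy (plusT X)).
    apply: pruned_class_uniq (clGx _ _ (S_tplus SC) clPX) _.
    by rewrite eq_xy; apply: clGy (S_tplus SC) clPX.
  apply: homeq_trans (homeq_sym (absorb Gx)) (homeq_trans _ (absorb Gy)).
  exact: homeq_prodT hom_xy (homeq_refl X).
Qed.

Lemma closed_tplus_Rstar_idem : plus_is_Rstar_idem S (@tmul Sigma) (@tplus Sigma).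
Proof.
move=> C SC; split; first exact: S_tplus.
by split; [apply: closed_tplus_idem | apply: closed_tplus_Rstar].
Qed.
End Plus.

Section Star.
Hypothesis S_tstar : forall C, S C -> S (tstar C).

Lemma closed_tstar_idem C : S C -> idem (@tmul Sigma) (tstar C).
Proof.
move=> SC; have [X [_ clX]] := T1_pruned_class (S_T1 SC).
have clSX := pruned_class_tstar (S_T1 (S_tstar SC)) clX.
have STC := S_tstar SC.
apply: pruned_class_eq (closed_pruned_class_tmul STC STC clSX clSX) clSX _.
exact: homeq_prodT_starT (starT X).
Qed.

Lemma closed_tstar_Lstar C : S C -> Lstar S (@tmul Sigma) C (tstar C).
Proof.
move=> SC x y Sx Sy; have [X [treeX clX]] := T1_pruned_class (S_T1 SC).
have clSX := pruned_class_tstar (S_T1 (S_tstar SC)) clX.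
have [[Gx [treeGx clGx]] [Gy [treeGy clGy]]] :=
  (closed_rmul_pruned_class Sx, closed_rmul_pruned_class Sy).
have absorb G : homeq (prodT X (prodT (starT X) G)) (prodT X G).
  apply: homeq_trans (homeq_sym (homeq_prodTA _ _ _)) _.
  exact: homeq_prodT (homeq_prodT_starT X) (homeq_refl G).
split=> eq_xy.
- apply: pruned_class_eq (clGx _ _ (S_tstar SC) clSX) (clGy _ _ (S_tstar SC) clSX) _.
  have [hom_xy hom_yx] : homeq (prodT X Gx) (prodT X Gy).
    by apply: pruned_class_uniq (clGx _ _ SC clX) _; rewrite eq_xy; apply: clGy.
  by split; apply: hom_starT_prodT.
- apply: pruned_class_eq (clGx _ _ SC clX) (clGy _ _ SC clX) _.
  have hom_xy : homeq (prodT (starT X) Gx) (prodT (starT X) Gy).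
    apply: pruned_class_uniq (clGx _ _ (S_tstar SC) clSX) _.
    by rewrite eq_xy; apply: clGy (S_tstar SC) clSX.
  apply: homeq_trans (homeq_sym (absorb Gx)) (homeq_trans _ (absorb Gy)).
  exact: homeq_prodT (homeq_refl X) hom_xy.
Qed.

Lemma closed_tstar_Lstar_idem : star_is_Lstar_idem S (@tmul Sigma) (@tstar Sigma).
Proof.
move=> C SC; split; first exact: S_tstar.
by split; [apply: closed_tstar_idem | apply: closed_tstar_Lstar].
Qed.
End Star.
End Closed.
End PrunedTrees.

Lemma left_adequate_of_plus (A : Type) (S : A -> Prop) (m : A -> A -> A) (p : A -> A) :
  is_subsemigroup S m -> idems_commute S m -> plus_is_Rstar_idem S m p -> left_adequate S m.
Proof. by move=> sgS commS plusP; split=> //; split=> // a Sa; exists (p a); apply: plusP. Qed.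

Lemma right_adequate_of_star (A : Type) (S : A -> Prop) (m : A -> A -> A) (s : A -> A) :
  is_subsemigroup S m -> idems_commute S m -> star_is_Lstar_idem S m s -> right_adequate S m.
Proof. by move=> sgS commS starP; split=> //; split=> // a Sa; exists (s a); apply: starP. Qed.

Theorem theorem4p10 (Sigma : Type) (S : tclass Sigma -> Prop) :
  (forall C, S C -> T1 C) ->
  ( (forall C D, S C -> S D -> S (tmul C D)) ->
    (forall C, S C -> S (tplus C)) ->
    (forall C, S C -> S (tstar C)) ->
    adequate S (@tmul Sigma) /\
    plus_is_Rstar_idem S (@tmul Sigma) (@tplus Sigma) /\
    star_is_Lstar_idem S (@tmul Sigma) (@tstar Sigma) ) /\
  ( (forall C D, S C -> S D -> S (tmul C D)) ->
    (forall C, S C -> S (tplus C)) ->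
    left_adequate S (@tmul Sigma) /\
    plus_is_Rstar_idem S (@tmul Sigma) (@tplus Sigma) ) /\
  ( (forall C D, S C -> S D -> S (tmul C D)) ->
    (forall C, S C -> S (tstar C)) ->
    right_adequate S (@tmul Sigma) /\
    star_is_Lstar_idem S (@tmul Sigma) (@tstar Sigma) ).
Proof.
move=> S_T1.
have left_part (S_tmul : forall C D, S C -> S D -> S (tmul C D))
    (S_tplus : forall C, S C -> S (tplus C)) : left_adequate S (@tmul Sigma) /\
    plus_is_Rstar_idem S (@tmul Sigma) (@tplus Sigma).
  have plusP := closed_tplus_Rstar_idem S_T1 S_tmul S_tplus.
  split=> //; apply: left_adequate_of_plus plusP.
    exact: closed_tmul_subsemigroup.
  exact: closed_idems_commute.
have right_part (S_tmul : forall C D, S C -> S D -> S (tmul C D))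
    (S_tstar : forall C, S C -> S (tstar C)) : right_adequate S (@tmul Sigma) /\
    star_is_Lstar_idem S (@tmul Sigma) (@tstar Sigma).
  have starP := closed_tstar_Lstar_idem S_T1 S_tmul S_tstar.
  split=> //; apply: right_adequate_of_star starP.
    exact: closed_tmul_subsemigroup.
  exact: closed_idems_commute.
split=> [S_tmul S_tplus S_tstar|]; last by split; [apply: left_part | apply: right_part].
have [[ladS plusP] [radS starP]] := (left_part S_tmul S_tplus, right_part S_tmul S_tstar).
by split; first split.
Qed.
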